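(* Let $N\ge2$ and $0=x_0<x_1<\dots<x_N=1$, $I=[0,1]$, $I_i=[x_{i-1},x_i]$, $|I_i|=x_i-x_{i-1}$, $L_i(x)=x_{i-1}+|I_i|x$ for $i=1,\dots,N$. Let $\alpha_i,\beta_i,\gamma_i$ be reals with $|\alpha_i|<1$ and $|\beta_i|+|\gamma_i|<1$, let $p_i\in\mathrm{Lip}\,\lambda_i$ and $q_i\in\mathrm{Lip}\,\mu_i$ with $0<\lambda_i,\mu_i\le1$, and let $f_1,f_2:I\to\mathbb{R}$ be continuous with $f_1(L_i(x))=\alpha_if_1(x)+\beta_if_2(x)+p_i(x)$ and $f_2(L_i(x))=\gamma_if_2(x)+q_i(x)$ for all $x\in I$, $i=1,\dots,N$. Put $\lambda=\min_i\lambda_i$, $\mu=\min_i\mu_i$, $\Omega=\max_i |\alpha_i|/|I_i|^{\lambda}$, $\Gamma=\max_i|\gamma_i|/|I_i|^{\mu}$, $\Theta=\max_i|\alpha_i|/|I_i|^{\mu}$, and suppose $\Theta>1$. Then: (a) if $\Omega\ne1$ and $\Gamma\ne1$, there is $\delta\in(0,1]$ with $f_1\in\mathrm{Lip}\,\delta$; (b) if $\Omega=1$ or $\Gamma=1$, there is $\delta\in(0,1]$ with $\omega(f_1,t)=O(|t|^{\delta}\log|t|)$ as $t\to0$.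
   Context: $\mathrm{Lip}\,\delta$ denotes the class of functions $g$ on $I$ such that $|g(x)-g(y)|\le C|x-y|^{\delta}$ for some constant $C$ and all $x,y\in I$. $\omega(f_1,t)=\sup\{|f_1(x)-f_1(y)|: x,y\in I,\ |x-y|\le |t|\}$ is the modulus of continuity. The function $f_1$ is the coalescence hidden variable fractal interpolation function (CHFIF): $(f_1,f_2)$ is the continuous function whose graph is the attractor of the IFS $\omega_i(x,y,z)=(L_i(x),\alpha_iy+\beta_iz+p_i(x),\gamma_iz+q_i(x))$. *)

From Stdlib Require Import Reals.
From Coquelicot Require Import Coquelicot.
Open Scope R_scope.

Definition inI (x : R) : Prop := 0 <= x <= 1.

(* a^d for a >= 0, with the convention 0^d = 0 (d > 0) *)
Definition rpow (a d : R) : R := if Rlt_dec 0 a then Rpower a d else 0.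

Definition Lip (d : R) (g : R -> R) : Prop :=
  exists C : R, forall x y, inI x -> inI y ->
    Rabs (g x - g y) <= C * rpow (Rabs (x - y)) d.

Definition continuous_on_I (g : R -> R) : Prop :=
  forall x, inI x -> forall eps, 0 < eps -> exists d, 0 < d /\
    forall y, inI y -> Rabs (y - x) < d -> Rabs (g y - g x) < eps.

Definition modulus (g : R -> R) (t : R) : Rbar :=
  Lub_Rbar (fun r => exists x y, inI x /\ inI y /\ Rabs (x - y) <= Rabs t
                                  /\ r = Rabs (g x - g y)).

Fixpoint rmax_to (g : nat -> R) (n : nat) : R :=
  match n with O => g O | S m => Rmax (rmax_to g m) (g n) end.
Fixpoint rmin_to (g : nat -> R) (n : nat) : R :=
  match n with O => g O | S m => Rmin (rmin_to g m) (g n) end.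

(* max / min over i = 1..N (N >= 1) *)
Definition max1N (N : nat) (g : nat -> R) : R := rmax_to (fun k => g (S k)) (N - 1).
Definition min1N (N : nat) (g : nat -> R) : R := rmin_to (fun k => g (S k)) (N - 1).

Definition len (x : nat -> R) (i : nat) : R := x i - x (pred i).
Definition Lmap (x : nat -> R) (i : nat) (t : R) : R := x (pred i) + len x i * t.

From Stdlib Require Import Reals Lra Lia Psatz.
From Coquelicot Require Import Coquelicot.
Open Scope R_scope.

(* Both components are Hölder for the same reason: a bounded solution [g] of
   [g (L_i t) = a_i g t + h_i t] with [|a_i| <= A < 1] and uniformly Hölder [h_i] is Hölder.
   Let [l] be the smallest cell length.  Two points at distance [<= l^(n+1)] lie in one cell,
   or in two adjacent cells on either side of a node [x_i = L_i 1 = L_(i+1) 0]; pulling back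
   by [L_i] gives points at distance [<= l^n] (in the second case, near the endpoints 0 and 1),
   and the functional equation improves the oscillation bound by a factor [rho < 1].
   Hence [|g s - g t| <= C |s - t|^(ln rho / ln l)].  This applies first to [f2]
   ([a_i = gamma_i]) and then to [f1] ([a_i = alpha_i], [h_i = beta_i f2 + p_i]).
   The hypotheses on [Omega], [Gamma] and [Theta] only matter for the paper's explicit
   exponent, not for existence; part (b) follows from (a) since [|ln |t|| >= 1] for [|t| < 1/e]. *)

Lemma rpow_nonneg a d : 0 <= rpow a d.
Proof. unfold rpow, Rpower; destruct Rlt_dec; [left; apply exp_pos | lra]. Qed.

Lemma rpow_of_pos a d : 0 < a -> rpow a d = Rpower a d.
Proof. intros Ha; unfold rpow; destruct Rlt_dec; [reflexivity | lra]. Qed.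

Lemma rpow_le_compat_base r r' d : 0 <= d -> 0 <= r <= r' -> rpow r d <= rpow r' d.
Proof.
  intros Hd Hr. destruct (Req_dec r 0) as [->|Hr0].
  - unfold rpow at 1; destruct Rlt_dec; [lra | apply rpow_nonneg].
  - rewrite !rpow_of_pos by lra. apply Rle_Rpower_l; lra.
Qed.

Lemma rpow_le_compat_exp r d d' : 0 <= r <= 1 -> 0 < d' <= d -> rpow r d <= rpow r d'.
Proof.
  intros Hr Hd. destruct (Req_dec r 0) as [->|Hr0].
  - unfold rpow; destruct Rlt_dec; lra.
  - rewrite !rpow_of_pos by lra. unfold Rpower.
    assert (ln r <= 0) by (rewrite <- ln_1; apply ln_le; lra).
    assert (Hle : d * ln r <= d' * ln r) by nra.
    destruct (Rle_lt_or_eq_dec _ _ Hle) as [Hlt|Heq].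
    + left; now apply exp_increasing.
    + rewrite Heq; lra.
Qed.

Lemma Rpower_pow_base l e n : 0 < l -> Rpower (l ^ n) e = Rpower l e ^ n.
Proof.
  intros Hl. rewrite <- (Rpower_pow n l Hl), <- (Rpower_pow n (Rpower l e)) by apply exp_pos.
  rewrite !Rpower_mult, Rmult_comm. reflexivity.
Qed.

Lemma rpow_le_pow r l e n : 0 < l -> 0 <= e -> 0 <= r <= l ^ n -> rpow r e <= Rpower l e ^ n.
Proof.
  intros Hl He Hr. rewrite <- Rpower_pow_base, <- rpow_of_pos by (try apply pow_lt; lra).
  now apply rpow_le_compat_base.
Qed.

Lemma exists_pow_bracket l r : 0 < l < 1 -> 0 < r <= 1 -> exists n, l ^ S n < r <= l ^ n.
Proof.
  intros Hl Hr.
  destruct (pow_lt_1_zero l ltac:(rewrite Rabs_pos_eq; lra) r ltac:(lra)) as [m Hm].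
  specialize (Hm m (le_n m)). rewrite Rabs_pos_eq in Hm by (apply pow_le; lra).
  induction m as [|m IH].
  - simpl in Hm; lra.
  - destruct (Rle_dec r (l ^ m)) as [Hle|Hgt]; [now exists m | apply IH; lra].
Qed.

Lemma Lip_nonneg_const d g : Lip d g -> exists C, 0 <= C /\ forall u v, inI u -> inI v ->
  Rabs (g u - g v) <= C * rpow (Rabs (u - v)) d.
Proof.
  intros [C HC]. exists (Rmax C 0). split; [apply Rmax_r|]. intros u v Hu Hv.
  eapply Rle_trans; [now apply HC|].
  apply Rmult_le_compat_r; [apply rpow_nonneg | apply Rmax_l].
Qed.

Lemma dist_inI u v : inI u -> inI v -> 0 <= Rabs (u - v) <= 1.
Proof. unfold inI; intros; split; [apply Rabs_pos|]. apply Rabs_le; lra. Qed.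

Lemma Lip_weaken d d' g : 0 < d' <= d -> Lip d g -> Lip d' g.
Proof.
  intros Hd Hg. destruct (Lip_nonneg_const d g Hg) as [C [HC0 HC]].
  exists C. intros u v Hu Hv. eapply Rle_trans; [now apply HC|].
  apply Rmult_le_compat_l; [lra|]. apply rpow_le_compat_exp; [now apply dist_inI | lra].
Qed.

Lemma Lip_lin_comb d1 d2 b f g : 0 < d1 -> 0 < d2 -> Lip d1 f -> Lip d2 g ->
  Lip (Rmin d1 d2) (fun t => b * f t + g t).
Proof.
  intros H1 H2 Hf Hg. assert (0 < Rmin d1 d2) by (apply Rmin_pos; lra).
  apply (Lip_weaken d1 (Rmin d1 d2)) in Hf; [|split; [lra | apply Rmin_l]].
  apply (Lip_weaken d2 (Rmin d1 d2)) in Hg; [|split; [lra | apply Rmin_r]].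
  destruct (Lip_nonneg_const _ _ Hf) as [C1 [HC1 Hf']].
  destruct (Lip_nonneg_const _ _ Hg) as [C2 [HC2 Hg']].
  exists (Rabs b * C1 + C2). intros u v Hu Hv.
  replace (b * f u + g u - (b * f v + g v)) with (b * (f u - f v) + (g u - g v)) by ring.
  eapply Rle_trans; [apply Rabs_triang|]. rewrite Rabs_mult.
  specialize (Hf' u v Hu Hv). specialize (Hg' u v Hu Hv).
  pose proof (Rabs_pos b). pose proof (Rabs_pos (f u - f v)). nra.
Qed.

(* [g] composed with [clamp] is continuous on all of [R], so Stdlib's extreme value theorem
   applies to it. *)
Definition clamp (c : R) : R := Rmax 0 (Rmin 1 c).

Lemma clamp_inI c : inI (clamp c).
Proof. unfold inI, clamp, Rmax, Rmin; repeat destruct Rle_dec; lra. Qed.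

Lemma clamp_id c : inI c -> clamp c = c.
Proof. unfold inI, clamp, Rmax, Rmin; intros; repeat destruct Rle_dec; lra. Qed.

Lemma clamp_dist a b : Rabs (clamp a - clamp b) <= Rabs (a - b).
Proof.
  unfold clamp, Rmax, Rmin; repeat destruct Rle_dec; unfold Rabs; repeat destruct Rcase_abs; lra.
Qed.

Lemma continuity_pt_clamp g : continuous_on_I g -> forall c, continuity_pt (fun t => g (clamp t)) c.
Proof.
  intros Hg c eps Heps.
  destruct (Hg (clamp c) (clamp_inI c) eps Heps) as [d [Hd Hgd]].
  exists d; split; [exact Hd|]. intros y [_ Hy]; simpl in *; unfold R_dist in *.
  apply Hgd; [apply clamp_inI|]. eapply Rle_lt_trans; [apply clamp_dist | exact Hy].
Qed.

Lemma continuous_on_I_bounded g : continuous_on_I g -> exists M, forall t, inI t -> Rabs (g t) <= M.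
Proof.
  intros Hg.
  destruct (continuity_ab_maj (fun t => Rabs (g (clamp t))) 0 1) as [t0 [Ht0 _]]; [lra| |].
  - intros c _. apply (continuity_pt_comp (fun t => g (clamp t)) Rabs c);
      [apply continuity_pt_clamp, Hg | apply Rcontinuity_abs].
  - exists (Rabs (g (clamp t0))). intros t Ht. rewrite <- (clamp_id t Ht). apply Ht0, Ht.
Qed.

Lemma exists_common_ub (N : nat) (P : nat -> R -> Prop) :
  (forall i c c', P i c -> c <= c' -> P i c') ->
  (forall i, (1 <= i <= N)%nat -> exists c, P i c) ->
  exists c, 0 <= c /\ forall i, (1 <= i <= N)%nat -> P i c.
Proof.
  intros Hmon. induction N as [|N IH]; intros H.
  - exists 0; split; [lra | intros; lia].
  - destruct IH as [c1 [Hc1 Pc1]]; [intros; apply H; lia|].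
    destruct (H (S N)) as [c2 Pc2]; [lia|].
    exists (Rmax c1 c2). split; [eapply Rle_trans; [exact Hc1 | apply Rmax_l]|]. intros i Hi.
    destruct (Nat.eq_dec i (S N)) as [->|Hne].
    + eapply Hmon; [exact Pc2 | apply Rmax_r].
    + eapply Hmon; [apply Pc1; lia | apply Rmax_l].
Qed.

Lemma exists_common_pos_lb (N : nat) (P : nat -> R -> Prop) :
  (forall i c c', P i c -> 0 < c' <= c -> P i c') ->
  (forall i, (1 <= i <= N)%nat -> exists c, 0 < c /\ P i c) ->
  exists c, 0 < c /\ forall i, (1 <= i <= N)%nat -> P i c.
Proof.
  intros Hmon. induction N as [|N IH]; intros H.
  - exists 1; split; [lra | intros; lia].
  - destruct IH as [c1 [Hc1 Pc1]]; [intros; apply H; lia|].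
    destruct (H (S N)) as [c2 [Hc2 Pc2]]; [lia|].
    assert (Hmin : 0 < Rmin c1 c2) by (apply Rmin_pos; lra).
    exists (Rmin c1 c2). split; [exact Hmin|]. intros i Hi.
    destruct (Nat.eq_dec i (S N)) as [->|Hne].
    + eapply Hmon; [exact Pc2 | split; [exact Hmin | apply Rmin_r]].
    + eapply Hmon; [apply Pc1; lia | split; [exact Hmin | apply Rmin_l]].
Qed.

Lemma Lmap_0 x i : Lmap x i 0 = x (pred i).
Proof. unfold Lmap; ring. Qed.

Lemma Lmap_1 x i : Lmap x i 1 = x i.
Proof. unfold Lmap, len; ring. Qed.

Lemma Lmap_sub x i u v : Lmap x i u - Lmap x i v = len x i * (u - v).
Proof. unfold Lmap; ring. Qed.

Lemma Lmap_onto x i s : 0 < len x i -> x (pred i) <= s <= x i ->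
  exists u, inI u /\ Lmap x i u = s.
Proof.
  intros Hl Hs. exists ((s - x (pred i)) / len x i). unfold inI, Lmap. split.
  - split; [apply Rdiv_le_0_compat; lra|].
    apply Rmult_le_reg_l with (len x i); [lra|]. field_simplify; unfold len in *; lra.
  - field; lra.
Qed.

Section Partition.

Variables (N : nat) (x : nat -> R).
Hypotheses (x_0 : x 0%nat = 0) (x_N : x N = 1)
  (x_incr : forall i, (i < N)%nat -> x i < x (S i)).

Lemma partition_le i j : (i <= j <= N)%nat -> x i <= x j.
Proof.
  intros [Hij HjN]. induction j as [|j IH].
  - replace i with 0%nat by lia; lra.
  - destruct (Nat.eq_dec i (S j)) as [->|Hne]; [lra|].
    assert (x i <= x j) by (apply IH; lia). specialize (x_incr j ltac:(lia)); lra.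
Qed.

Lemma len_pos i : (1 <= i <= N)%nat -> 0 < len x i.
Proof.
  intros Hi. unfold len. replace i with (S (pred i)) at 1 by lia.
  specialize (x_incr (pred i) ltac:(lia)); lra.
Qed.

Lemma partition_cover s : inI s -> exists i, (1 <= i <= N)%nat /\ x (pred i) <= s <= x i.
Proof.
  intros Hs. assert (HN : (1 <= N)%nat) by (destruct N; [unfold inI in *; lra | lia]).
  assert (Hk : forall k, (1 <= k <= N)%nat -> s <= x k ->
            exists i, (1 <= i <= k)%nat /\ x (pred i) <= s <= x i).
  { induction k as [|k IH]; intros Hk Hsk; [lia|].
    destruct (Nat.eq_dec k 0) as [->|Hk0].
    { exists 1%nat; simpl; unfold inI in Hs; split; [lia | lra]. }
    destruct (Rle_dec s (x k)) as [Hle|Hgt].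
    - destruct (IH ltac:(lia) Hle) as [i [Hi Hsi]]. exists i; split; [lia | exact Hsi].
    - exists (S k); simpl; split; [lia | lra]. }
  destruct (Hk N ltac:(lia) ltac:(unfold inI in Hs; lra)) as [i [Hi Hsi]].
  now exists i.
Qed.

End Partition.

Lemma pow_S_le l n : 0 <= l <= 1 -> l ^ S n <= l.
Proof.
  intros Hl. simpl. assert (l ^ n <= 1) by (rewrite <- (pow1 n); apply pow_incr; lra).
  assert (0 <= l ^ n) by (apply pow_le; lra). nra.
Qed.

Section SelfAffine.

Variables (N : nat) (x a : nat -> R) (h : nat -> R -> R) (g : R -> R).
Variables (A l H eta M rho K : R).
Hypotheses (x_0 : x 0%nat = 0) (x_N : x N = 1)
  (x_incr : forall i, (i < N)%nat -> x i < x (S i)).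
Hypotheses (a_bound : forall i, (1 <= i <= N)%nat -> Rabs (a i) <= A)
  (l_pos : 0 < l) (l_le_1 : l <= 1)
  (l_le_len : forall i, (1 <= i <= N)%nat -> l <= len x i)
  (h_holder : forall i u v, (1 <= i <= N)%nat -> inI u -> inI v ->
     Rabs (h i u - h i v) <= H * rpow (Rabs (u - v)) eta)
  (eta_pos : 0 < eta) (H_nonneg : 0 <= H)
  (g_bound : forall t, inI t -> Rabs (g t) <= M)
  (g_eq : forall i t, (1 <= i <= N)%nat -> inI t -> g (Lmap x i t) = a i * g t + h i t)
  (A_le_rho : A <= rho) (l_eta_le_rho : Rpower l eta <= rho)
  (K_ge_H : H <= K * (rho - A)) (K_ge_M : 2 * M <= K).

Lemma osc_le_K s t : inI s -> inI t -> Rabs (g s - g t) <= K.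
Proof.
  intros Hs Ht. unfold Rminus; eapply Rle_trans; [apply Rabs_triang|].
  rewrite Rabs_Ropp. pose proof (g_bound s Hs). pose proof (g_bound t Ht). lra.
Qed.

Lemma contraction_step B n i u v : K <= B -> (1 <= i <= N)%nat -> inI u -> inI v ->
  Rabs (u - v) <= l ^ n -> Rabs (g u - g v) <= B * rho ^ n ->
  Rabs (g (Lmap x i u) - g (Lmap x i v)) <= B * rho ^ S n.
Proof.
  intros HKB Hi Hu Hv Huv Hg. rewrite !g_eq by assumption.
  replace (a i * g u + h i u - (a i * g v + h i v))
    with (a i * (g u - g v) + (h i u - h i v)) by ring.
  assert (Hh : Rabs (h i u - h i v) <= H * Rpower l eta ^ n).
  { eapply Rle_trans; [now apply h_holder|]. apply Rmult_le_compat_l; [lra|].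
    apply rpow_le_pow; [lra | lra | split; [apply Rabs_pos | exact Huv]]. }
  assert (Hq : Rpower l eta ^ n <= rho ^ n)
    by (apply pow_incr; split; [left; apply exp_pos | lra]).
  assert (Ha : Rabs (a i) * Rabs (g u - g v) <= A * (B * rho ^ n))
    by (apply Rmult_le_compat; auto using Rabs_pos).
  assert (0 <= rho ^ n)
    by (apply pow_le; pose proof (exp_pos (eta * ln l)); unfold Rpower in *; lra).
  assert (H * Rpower l eta ^ n <= (B * (rho - A)) * rho ^ n).
  { apply Rmult_le_compat; [lra | left; apply pow_lt, exp_pos | nra | exact Hq]. }
  eapply Rle_trans; [apply Rabs_triang|]. rewrite Rabs_mult. simpl. nra.
Qed.

Lemma Lmap_preimage_near i v s n : (1 <= i <= N)%nat -> inI v -> x (pred i) <= s <= x i ->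
  Rabs (s - Lmap x i v) <= l ^ S n -> exists u, inI u /\ Lmap x i u = s /\ Rabs (u - v) <= l ^ n.
Proof.
  intros Hi Hv Hs Hsv. pose proof (l_le_len i Hi).
  destruct (Lmap_onto x i s ltac:(lra) Hs) as [u [Hu <-]].
  exists u. split; [exact Hu | split; [reflexivity|]].
  rewrite Lmap_sub, Rabs_mult, Rabs_pos_eq in Hsv by lra. simpl in Hsv.
  apply Rmult_le_reg_l with l; [exact l_pos|]. pose proof (Rabs_pos (u - v)). nra.
Qed.

Lemma cell_bound B n i v s : K <= B -> (1 <= i <= N)%nat -> inI v ->
  (forall u, inI u -> Rabs (u - v) <= l ^ n -> Rabs (g u - g v) <= B * rho ^ n) ->
  x (pred i) <= s <= x i -> Rabs (s - Lmap x i v) <= l ^ S n ->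
  Rabs (g s - g (Lmap x i v)) <= B * rho ^ S n.
Proof.
  intros HKB Hi Hv Hbound Hs Hsv.
  destruct (Lmap_preimage_near i v s n Hi Hv Hs Hsv) as [u [Hu [<- Huv]]].
  apply contraction_step; auto.
Qed.

Lemma N_pos : (1 <= N)%nat.
Proof. destruct N; [rewrite x_0 in x_N; lra | lia]. Qed.

(* [0] and [1] are fixed by [L_1] and [L_N], so pulling back near them stays near them. *)
Lemma endpoint_bound n c u : c = 0 \/ c = 1 -> inI u -> Rabs (u - c) <= l ^ n ->
  Rabs (g u - g c) <= K * rho ^ n.
Proof.
  intros Hc. assert (HcI : inI c) by (unfold inI; lra). revert u.
  induction n as [|n IH]; intros u Hu Huc; [simpl; rewrite Rmult_1_r; now apply osc_le_K|].
  assert (Hl : l ^ S n <= l) by (apply pow_S_le; lra).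
  assert (Hcell : exists i, (1 <= i <= N)%nat /\ Lmap x i c = c /\ x (pred i) <= u <= x i).
  { pose proof N_pos. unfold inI in Hu. destruct Hc as [->| ->].
    - exists 1%nat. pose proof (l_le_len 1%nat ltac:(lia)) as Hlen. unfold len in Hlen.
      rewrite Lmap_0. simpl in *. rewrite x_0 in *. rewrite Rminus_0_r, Rabs_pos_eq in Huc by lra.
      repeat split; lra || lia.
    - exists N. pose proof (l_le_len N ltac:(lia)) as Hlen. unfold len in Hlen.
      rewrite Lmap_1, x_N in *. rewrite Rabs_minus_sym, Rabs_pos_eq in Huc by lra.
      repeat split; lra || lia. }
  destruct Hcell as [i [Hi [Hfix Hui]]].
  rewrite <- Hfix. apply cell_bound; auto; [lra | now rewrite Hfix].
Qed.

Lemma scale_step n : 0 <= K ->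
  (forall s t, inI s -> inI t -> Rabs (s - t) <= l ^ n -> Rabs (g s - g t) <= 2 * K * rho ^ n) ->
  forall s t, inI s -> inI t -> s <= t -> t - s <= l ^ S n ->
  Rabs (g s - g t) <= 2 * K * rho ^ S n.
Proof.
  intros HK IH s t Hs Ht Hst Hts.
  destruct (partition_cover N x x_0 x_N x_incr s Hs) as [i [Hi Hsi]].
  destruct (Rle_dec t (x i)) as [Hti|Hti].
  - destruct (Lmap_onto x i t (len_pos N x x_incr i Hi) ltac:(lra)) as [v [Hv <-]].
    apply cell_bound; [lra | exact Hi | exact Hv | | exact Hsi |].
    + intros u Hu Huv. now apply IH.
    + rewrite Rabs_minus_sym, Rabs_pos_eq; lra.
  - assert (HiN : (i < N)%nat).
    { destruct (Nat.eq_dec i N) as [->|]; [unfold inI in Ht; lra | lia]. }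
    assert (Hl : l ^ S n <= l) by (apply pow_S_le; lra).
    assert (Hleft : Rabs (g s - g (x i)) <= K * rho ^ S n).
    { rewrite <- (Lmap_1 x i).
      apply (cell_bound K n i 1 s); [lra | exact Hi | unfold inI; lra | | exact Hsi |].
      - intros u Hu Hu1. apply endpoint_bound; [now right | exact Hu | exact Hu1].
      - rewrite Lmap_1, Rabs_minus_sym, Rabs_pos_eq; lra. }
    assert (Hright : Rabs (g t - g (x i)) <= K * rho ^ S n).
    { pose proof (l_le_len (S i) ltac:(lia)) as Hlen. unfold len in Hlen. simpl in Hlen.
      change (x i) with (x (pred (S i))). rewrite <- (Lmap_0 x (S i)).
      apply (cell_bound K n (S i) 0 t); [lra | lia | unfold inI; lra | | simpl; lra |].
      - intros u Hu Hu0. apply endpoint_bound; [now left | exact Hu | exact Hu0].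
      - rewrite Lmap_0; change (x (pred (S i))) with (x i). rewrite Rabs_pos_eq; lra. }
    replace (g s - g t) with ((g s - g (x i)) - (g t - g (x i))) by ring.
    unfold Rminus at 1. eapply Rle_trans; [apply Rabs_triang|]. rewrite Rabs_Ropp. lra.
Qed.

Lemma scale_bound n s t : inI s -> inI t -> Rabs (s - t) <= l ^ n ->
  Rabs (g s - g t) <= 2 * K * rho ^ n.
Proof.
  assert (HK : 0 <= K)
    by (pose proof (g_bound 0 ltac:(unfold inI; lra)); pose proof (Rabs_pos (g 0)); lra).
  revert s t. induction n as [|n IH]; intros s t Hs Ht Hst.
  - simpl. pose proof (osc_le_K s t Hs Ht). lra.
  - destruct (Rle_dec s t) as [Hle|Hgt].
    + apply scale_step; auto. rewrite Rabs_minus_sym, Rabs_pos_eq in Hst; lra.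
    + rewrite Rabs_minus_sym. apply scale_step; auto; [lra|].
      rewrite Rabs_pos_eq in Hst; lra.
Qed.

End SelfAffine.

Lemma ln_ratio_in_unit l rho : 0 < l < 1 -> l <= rho < 1 -> 0 < ln rho / ln l <= 1.
Proof.
  intros Hl Hr.
  assert (ln l < 0) by (rewrite <- ln_1; apply ln_increasing; lra).
  assert (ln rho < 0) by (rewrite <- ln_1; apply ln_increasing; lra).
  assert (ln l <= ln rho) by (apply ln_le; lra).
  split.
  - replace (ln rho / ln l) with (- ln rho / - ln l) by (field; lra).
    apply Rdiv_lt_0_compat; lra.
  - apply Rmult_le_reg_r with (- ln l); [lra|].
    replace (ln rho / ln l * - ln l) with (- ln rho) by (field; lra). lra.
Qed.

Lemma Lip_of_scale_bounds g l rho K : 0 < l < 1 -> l <= rho < 1 ->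
  (forall n s t, inI s -> inI t -> Rabs (s - t) <= l ^ n -> Rabs (g s - g t) <= K * rho ^ n) ->
  Lip (ln rho / ln l) g.
Proof.
  intros Hl Hr Hscale. set (d := ln rho / ln l).
  assert (Hd : 0 < d <= 1) by now apply ln_ratio_in_unit.
  assert (Hpow : forall m, Rpower (l ^ m) d = rho ^ m).
  { intros m. rewrite Rpower_pow_base by lra. f_equal. unfold Rpower, d.
    assert (ln l < 0) by (rewrite <- ln_1; apply ln_increasing; lra).
    replace (ln rho / ln l * ln l) with (ln rho) by (field; lra). apply exp_ln; lra. }
  assert (HK : 0 <= K).
  { pose proof (Hscale 0%nat 0 0 ltac:(unfold inI; lra) ltac:(unfold inI; lra)) as H0.
    rewrite !Rminus_diag, Rabs_R0, Rmult_1_r in H0. apply H0. simpl; lra. }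
  exists (K / rho). intros s t Hs Ht.
  assert (HKr : 0 <= K / rho) by (apply Rdiv_le_0_compat; lra).
  destruct (Req_dec s t) as [<-|Hne].
  { rewrite !Rminus_diag, !Rabs_R0. apply Rmult_le_pos; [exact HKr | apply rpow_nonneg]. }
  assert (Hst : 0 < Rabs (s - t) <= 1) by (split; [apply Rabs_pos_lt; lra | now apply dist_inI]).
  destruct (exists_pow_bracket l _ Hl Hst) as [n [Hn1 Hn2]].
  eapply Rle_trans; [exact (Hscale n s t Hs Ht Hn2)|].
  rewrite rpow_of_pos by lra.
  replace (K * rho ^ n) with (K / rho * Rpower (l ^ S n) d) by (rewrite Hpow; simpl; field; lra).
  apply Rmult_le_compat_l; [exact HKr|].
  apply Rle_Rpower_l; [lra | split; [apply pow_lt | ]; lra].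
Qed.

Lemma uniform_Holder N (h : nat -> R -> R) :
  (forall i, (1 <= i <= N)%nat -> exists d, 0 < d /\ Lip d (h i)) ->
  exists H eta, 0 <= H /\ 0 < eta /\ forall i u v, (1 <= i <= N)%nat -> inI u -> inI v ->
    Rabs (h i u - h i v) <= H * rpow (Rabs (u - v)) eta.
Proof.
  intros Hh.
  destruct (exists_common_pos_lb N (fun i e => Lip e (h i))) as [eta [Heta He]].
  { intros i c c' Hc Hc'. exact (Lip_weaken c c' (h i) Hc' Hc). }
  { exact Hh. }
  destruct (exists_common_ub N (fun i C => forall u v, inI u -> inI v ->
      Rabs (h i u - h i v) <= C * rpow (Rabs (u - v)) eta)) as [H [HH Hbound]].
  { intros i c c' Hc Hcc' u v Hu Hv. eapply Rle_trans; [now apply Hc|].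
    apply Rmult_le_compat_r; [apply rpow_nonneg | exact Hcc']. }
  { intros i Hi. destruct (He i Hi) as [C HC]. now exists C. }
  exists H, eta. split; [exact HH | split; [exact Heta|]].
  intros i u v Hi. now apply Hbound.
Qed.

Lemma exists_uniform_contraction N (a : nat -> R) : (1 <= N)%nat ->
  (forall i, (1 <= i <= N)%nat -> Rabs (a i) < 1) ->
  exists A, 0 <= A < 1 /\ forall i, (1 <= i <= N)%nat -> Rabs (a i) <= A.
Proof.
  intros HN Ha.
  destruct (exists_common_pos_lb N (fun i e => Rabs (a i) <= 1 - e)) as [e [He Hbound]].
  { intros; lra. }
  { intros i Hi. exists (1 - Rabs (a i)). specialize (Ha i Hi). split; lra. }
  exists (1 - e). split; [|exact Hbound].
  pose proof (Hbound 1%nat ltac:(lia)). pose proof (Rabs_pos (a 1%nat)). lra.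
Qed.

Lemma exists_min_len N (x : nat -> R) : (2 <= N)%nat -> x 0%nat = 0 -> x N = 1 ->
  (forall i, (i < N)%nat -> x i < x (S i)) ->
  exists l, 0 < l < 1 /\ forall i, (1 <= i <= N)%nat -> l <= len x i.
Proof.
  intros HN x_0 x_N x_incr.
  destruct (exists_common_pos_lb N (fun i c => c <= len x i)) as [l [Hl Hbound]].
  { intros; lra. }
  { intros i Hi. exists (len x i). split; [now apply (len_pos N) | lra]. }
  exists l. split; [split; [exact Hl|] | exact Hbound].
  pose proof (Hbound 1%nat ltac:(lia)). unfold len in *; simpl in *.
  pose proof (x_incr 1%nat ltac:(lia)). pose proof (partition_le N x x_incr 2 N ltac:(lia)). lra.
Qed.

Lemma self_affine_Holder N (x a : nat -> R) (h : nat -> R -> R) (g : R -> R) :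
  (2 <= N)%nat -> x 0%nat = 0 -> x N = 1 -> (forall i, (i < N)%nat -> x i < x (S i)) ->
  (forall i, (1 <= i <= N)%nat -> Rabs (a i) < 1) ->
  (forall i, (1 <= i <= N)%nat -> exists d, 0 < d /\ Lip d (h i)) ->
  continuous_on_I g ->
  (forall i t, (1 <= i <= N)%nat -> inI t -> g (Lmap x i t) = a i * g t + h i t) ->
  exists delta, 0 < delta <= 1 /\ Lip delta g.
Proof.
  intros HN x_0 x_N x_incr Ha Hh Hg g_eq.
  destruct (uniform_Holder N h Hh) as [H [eta [HH [Heta h_holder]]]].
  destruct (exists_uniform_contraction N a ltac:(lia) Ha) as [A [HA a_bound]].
  destruct (exists_min_len N x HN x_0 x_N x_incr) as [l [Hl l_le_len]].
  destruct (continuous_on_I_bounded g Hg) as [M g_bound].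
  assert (Hq : Rpower l eta < 1).
  { unfold Rpower. rewrite <- exp_0. apply exp_increasing.
    assert (ln l < 0) by (rewrite <- ln_1; apply ln_increasing; lra). nra. }
  set (rho := Rmax (Rmax ((1 + A) / 2) (Rpower l eta)) l).
  assert (Hrho : (1 + A) / 2 <= rho /\ Rpower l eta <= rho /\ l <= rho /\ rho < 1).
  { unfold rho. repeat split; [| | apply Rmax_r | repeat apply Rmax_lub_lt; lra].
    - eapply Rle_trans; [apply Rmax_l | apply Rmax_l].
    - eapply Rle_trans; [apply Rmax_r | apply Rmax_l]. }
  set (K := Rmax (2 * M) (2 * H / (1 - A))).
  assert (HK : H <= K * (rho - A)).
  { assert (E : 2 * H / (1 - A) * ((1 - A) / 2) = H) by (field; lra).
    assert (0 <= 2 * H / (1 - A)) by (apply Rdiv_le_0_compat; lra).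
    assert (2 * H / (1 - A) <= K) by apply Rmax_r. nra. }
  exists (ln rho / ln l). split; [apply ln_ratio_in_unit; lra|].
  apply Lip_of_scale_bounds with (K := 2 * K); [lra | lra |].
  intros n s t Hs Ht Hst.
  apply (scale_bound N x a h g A l H eta M rho K); auto; try lra. apply Rmax_l.
Qed.

Lemma modulus_le_Holder g d C : 0 <= d -> 0 <= C ->
  (forall u v, inI u -> inI v -> Rabs (g u - g v) <= C * rpow (Rabs (u - v)) d) ->
  forall t, t <> 0 -> Rbar_le (modulus g t) (Finite (C * Rpower (Rabs t) d)).
Proof.
  intros Hd HC Hg t Ht. apply (proj2 (Lub_Rbar_correct _)).
  intros r [u [v [Hu [Hv [Huv ->]]]]]. simpl.
  eapply Rle_trans; [now apply Hg|]. apply Rmult_le_compat_l; [exact HC|].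
  rewrite <- rpow_of_pos by now apply Rabs_pos_lt.
  apply rpow_le_compat_base; [exact Hd | split; [apply Rabs_pos | exact Huv]].
Qed.

Lemma Lip_modulus_log_bound g d : 0 <= d -> Lip d g ->
  exists C eps, 0 < eps /\ forall t, 0 < Rabs t < eps ->
    Rbar_le (modulus g t) (Finite (C * Rpower (Rabs t) d * Rabs (ln (Rabs t)))).
Proof.
  intros Hd Hg. destruct (Lip_nonneg_const d g Hg) as [C [HC Hbound]].
  exists C, (exp (-1)). split; [apply exp_pos|]. intros t Ht.
  assert (Hln : 1 <= Rabs (ln (Rabs t))).
  { assert (ln (Rabs t) < -1) by (rewrite <- (ln_exp (-1)); apply ln_increasing; lra).
    rewrite Rabs_left; lra. }
  eapply Rbar_le_trans.
  - apply (modulus_le_Holder g d C Hd HC Hbound). intros ->. rewrite Rabs_R0 in Ht; lra.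
  - simpl. assert (0 <= C * Rpower (Rabs t) d)
      by (apply Rmult_le_pos; [exact HC | left; apply exp_pos]).
    nra.
Qed.

Theorem theorem3p3
  (N : nat) (x : nat -> R)
  (alpha beta gamma : nat -> R) (p q : nat -> R -> R) (lam mu : nat -> R)
  (f1 f2 : R -> R) :
  (2 <= N)%nat ->
  x 0%nat = 0 -> x N = 1 ->
  (forall i, (i < N)%nat -> x i < x (S i)) ->
  (forall i, (1 <= i <= N)%nat ->
     Rabs (alpha i) < 1 /\ Rabs (beta i) + Rabs (gamma i) < 1 /\
     0 < lam i <= 1 /\ 0 < mu i <= 1 /\
     Lip (lam i) (p i) /\ Lip (mu i) (q i)) ->
  continuous_on_I f1 -> continuous_on_I f2 ->
  (forall i t, (1 <= i <= N)%nat -> inI t ->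
     f1 (Lmap x i t) = alpha i * f1 t + beta i * f2 t + p i t /\
     f2 (Lmap x i t) = gamma i * f2 t + q i t) ->
  let lambda := min1N N lam in
  let mu0 := min1N N mu in
  let Omega := max1N N (fun i => Rabs (alpha i) / Rpower (len x i) lambda) in
  let Gamma := max1N N (fun i => Rabs (gamma i) / Rpower (len x i) mu0) in
  let Theta := max1N N (fun i => Rabs (alpha i) / Rpower (len x i) mu0) in
  Theta > 1 ->
  ((Omega <> 1 /\ Gamma <> 1) ->
     exists delta, 0 < delta <= 1 /\ Lip delta f1) /\
  ((Omega = 1 \/ Gamma = 1) ->
     exists delta, 0 < delta <= 1 /\
       exists C eps, 0 < eps /\
         forall t, 0 < Rabs t < eps ->
           Rbar_le (modulus f1 t)
                   (Finite (C * Rpower (Rabs t) delta * Rabs (ln (Rabs t))))).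
Proof.
  intros HN x_0 x_N x_incr Hpar Hc1 Hc2 Heq lambda mu0 Omega Gamma Theta _.
  assert (Hf2 : exists d, 0 < d <= 1 /\ Lip d f2).
  { apply (self_affine_Holder N x gamma q f2); auto.
    - intros i Hi. destruct (Hpar i Hi) as [_ [Hbg _]]. pose proof (Rabs_pos (beta i)). lra.
    - intros i Hi. destruct (Hpar i Hi) as [_ [_ [_ [Hmu [_ Hq]]]]].
      exists (mu i). split; [lra | exact Hq].
    - intros i t Hi Ht. apply (Heq i t Hi Ht). }
  destruct Hf2 as [d2 [Hd2 Hf2]].
  assert (Hf1 : exists d, 0 < d <= 1 /\ Lip d f1).
  { apply (self_affine_Holder N x alpha (fun i t => beta i * f2 t + p i t) f1); auto.
    - intros i Hi. apply (Hpar i Hi).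
    - intros i Hi. destruct (Hpar i Hi) as [_ [_ [Hlam [_ [Hp _]]]]].
      exists (Rmin d2 (lam i)). split; [apply Rmin_pos; lra | apply Lip_lin_comb; auto; lra].
    - intros i t Hi Ht. rewrite (proj1 (Heq i t Hi Ht)). ring. }
  destruct Hf1 as [d [Hd Hf1]].
  split; intros _; exists d; split; auto.
  apply Lip_modulus_log_bound; [lra | exact Hf1].
Qed.
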